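(* Let $n,k$ be integers with $2<2k\le n$ such that $\mathrm{Pet}(n,k)$ is non-bipartite. Then either $g_{odd}(\mathrm{Pet}(n,k))=k+3$, or $$\max\Big(\frac{n}{k},\ \min\{\gcd(n,k-1),\gcd(n,k+1)\}+2\Big)\ \le\ g_{odd}(\mathrm{Pet}(n,k))\ \le\ \frac{n}{k}\,\mathrm{par}(k)+k+1,$$ where $\mathrm{par}(k)=1$ if $k$ is odd and $\mathrm{par}(k)=0$ if $k$ is even.
   Context: For integers $n,k$ with $2<2k\le n$, the generalized Petersen graph $\mathrm{Pet}(n,k)$ has vertex set $\{u_0,\dots,u_{n-1}\}\cup\{v_0,\dots,v_{n-1}\}$ and edge set $\{u_iu_{i+1}\}\cup\{u_iv_i\}\cup\{v_iv_{i+k}\}$, $i\in\{0,\dots,n-1\}$, with indices taken modulo $n$. For a non-bipartite graph $G$, the odd girth $g_{odd}(G)$ is the length of a shortest odd cycle of $G$. *)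

From HB Require Import structures.
From mathcomp Require Import all_boot all_order all_algebra.
Set Implicit Arguments. Unset Strict Implicit. Unset Printing Implicit Defensive.
Import Order.TTheory GRing.Theory Num.Theory.

(* Vertices of Pet(n,k): (false, i) is u_i, (true, i) is v_i, i : 'I_n. *)
Definition pet_vertex (n : nat) := (bool * 'I_n)%type.

Definition pet_arc (n k : nat) (x y : pet_vertex n) : bool :=
  match x, y with
  | (false, i), (false, j) => val j == (val i + 1) %% n
  | (false, i), (true, j) => val j == val i
  | (true, i), (true, j) => val j == (val i + k) %% n
  | _, _ => false
  end.

Definition pet_adj (n k : nat) : rel (pet_vertex n) :=
  fun x y => @pet_arc n k x y || @pet_arc n k y x.

Definition bipartite (T : Type) (adj : rel T) : Prop :=
  exists c : T -> bool, forall x y, adj x y -> c x != c y.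

Definition is_cycle (T : eqType) (adj : rel T) (s : seq T) : Prop :=
  2 < size s /\ uniq s /\ cycle adj s.

Definition is_odd_girth (T : eqType) (adj : rel T) (g : nat) : Prop :=
  (exists s, is_cycle adj s /\ odd (size s) /\ size s = g) /\
  (forall s, is_cycle adj s -> odd (size s) -> g <= size s).

Definition par (k : nat) : nat := if odd k then 1 else 0.

From HB Require Import structures.
From mathcomp Require Import all_boot all_order all_algebra.
Set Warnings "-notation-overridden,-ambiguous-paths".
From mathcomp Require Import zify ring.
Import Order.TTheory GRing.Theory Num.Theory.
Local Open Scope ring_scope.

(* Along a closed walk in Pet(n,k) let A and B be the signed numbers of rim and
   inner steps and s the number of spokes.  Then s is even, n divides A + k B,
   and A + B has the parity of the length, so it is odd for an odd cycle.
   If A + k B = 0 then k divides A, so the cycle has at least k rim edges, an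
   inner edge and two spokes, and k is even since A + B = (1 - k) B is odd;
   otherwise n <= |A + k B| <= k * length.  Furthermore gcd(n, k-1) divides
   A + B and gcd(n, k+1) divides A - B, which yields the gcd bound (when there
   are no spokes, B is a multiple of both, and these are coprime).  The upper
   bounds are witnessed by u_0 ... u_k v_k v_0 when k is even, and for odd k
   and n by the inner cycle v_0 v_k v_2k ..., closed along the rim when k does
   not divide n. *)

Lemma dvdz_modn_sub (n m : nat) : (n %| (m %% n)%N%:Z - m%:Z)%Z.
Proof. by apply/dvdzP; exists (- (m %/ n)%N%:Z); have := divn_eq m n; lia. Qed.

Lemma dvdz_modn_step (n m d j : nat) : j = ((m + d) %% n)%N ->
  (n %| j%:Z - m%:Z - d%:Z)%Z && (n %| m%:Z - j%:Z + d%:Z)%Z.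
Proof.
move=> jE; have fwd : (n %| j%:Z - m%:Z - d%:Z)%Z.
  by rewrite jE -addrA -opprD -PoszD dvdz_modn_sub.
rewrite fwd (_ : m%:Z - j%:Z + d%:Z = - (j%:Z - m%:Z - d%:Z)) ?rpredN //; ring.
Qed.

Lemma pet_adj_cases {n k : nat} {x y : pet_vertex n} : pet_adj k x y ->
  [\/ [/\ x.1 = false, y.1 = false &
         (n %| y.2%:Z - x.2%:Z - 1)%Z || (n %| y.2%:Z - x.2%:Z + 1)%Z],
      [/\ x.1 = true, y.1 = true &
         (n %| y.2%:Z - x.2%:Z - k%:Z)%Z || (n %| y.2%:Z - x.2%:Z + k%:Z)%Z] |
      y.1 = ~~ x.1 /\ y.2 = x.2].
Proof.
case: x y => [[] i] [[] j]; rewrite /pet_adj /pet_arc /= ?orbF ?orFb.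
- by case/orP=> /eqP/dvdz_modn_step/andP[? ?]; apply: Or32; split=> //; apply/orP; auto.
- by move/eqP=> ji; apply: Or33; split=> //; apply: val_inj.
- by move/eqP=> ij; apply: Or33; split=> //; apply: val_inj.
- by case/orP=> /eqP/dvdz_modn_step/andP[? ?]; apply: Or31; split=> //; apply/orP; auto.
Qed.

Lemma dvdz_chain (n x y z d e : int) :
  (n %| y - x - d)%Z -> (n %| z - y - e)%Z -> (n %| z - x - (d + e))%Z.
Proof.
move=> h1 h2; have -> : z - x - (d + e) = (y - x - d) + (z - y - e) by ring.
exact: rpredD.
Qed.

(* o, o' count forward and backward rim steps, i, i' inner ones, s spokes. *)
Lemma pet_walk_counts {n k : nat} {x : pet_vertex n} {p : seq (pet_vertex n)} :
  path (pet_adj k) x p ->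
  exists o o' i i' s : nat,
  [/\ size p = (o + o' + i + i' + s)%N,
      (n %| (last x p).2%:Z - x.2%:Z - (o%:Z - o'%:Z + k%:Z * (i%:Z - i'%:Z)))%Z,
      (last x p).1 = x.1 (+) odd s &
      s = 0%N -> if x.1 then (o + o' = 0)%N else (i + i' = 0)%N].
Proof.
elim: p x => [|y p IH] x /=.
  by exists 0%N, 0%N, 0%N, 0%N, 0%N; rewrite addbF !subrr mulr0 addr0 dvdz0; case: x.1.
case/andP=> xy /IH[o [o' [i [i' [s [size_p dv side spokes]]]]]].
have step (e : int) (o1 o1' i1 i1' : nat) : (n %| y.2%:Z - x.2%:Z - e)%Z ->
    e + (o%:Z - o'%:Z + k%:Z * (i%:Z - i'%:Z)) = o1%:Z - o1'%:Z + k%:Z * (i1%:Z - i1'%:Z) ->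
    (n %| (last y p).2%:Z - x.2%:Z - (o1%:Z - o1'%:Z + k%:Z * (i1%:Z - i1'%:Z)))%Z.
  by move=> st <-; exact: dvdz_chain st dv.
case: (pet_adj_cases xy) => [[x1 y1 /orP[] st]|[x1 y1 /orP[] st]|[y1 y2]].
- exists o.+1, o', i, i', s; rewrite y1 x1 in side spokes *; split=> //; first lia.
  by apply: (step 1) => //; lia.
- exists o, o'.+1, i, i', s; rewrite y1 x1 in side spokes *; split=> //; first lia.
  by apply: (step (-1)); [rewrite opprK | lia].
- exists o, o', i.+1, i', s; rewrite y1 x1 in side spokes *; split=> //; first lia.
  by apply: (step k%:Z) => //; nia.
- exists o, o', i, i'.+1, s; rewrite y1 x1 in side spokes *; split=> //; first lia.
  by apply: (step (- k%:Z)); [rewrite opprK | nia].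
- exists o, o', i, i', s.+1; split => //; first lia.
  + by rewrite -y2.
  + by rewrite side y1 /=; case: x.1; case: odd.
Qed.

Lemma minn_add2_le_max3_mul (x y : nat) : (minn x y + 2 <= maxn 3 (x * y))%N.
Proof. nia. Qed.

Section OddClosedWalkShift.

(* a, b, s: numbers of rim, inner and spoke edges of an odd closed walk;
   A, B: its signed rim and inner displacements. *)
Variables (n k a b s : nat) (A B : int).
Hypotheses (k_gt1 : (1 < k)%N) (le2kn : (2 * k <= n)%N) (len_gt2 : (2 < a + b + s)%N).
Hypotheses (s_even : ~~ odd s) (no_spokes : s = 0%N -> a = 0%N \/ b = 0%N).
Hypotheses (A_le : (`|A| <= a)%N) (B_le : (`|B| <= b)%N) (AB_odd : ~~ (2 %| A + B)%Z).
Hypothesis (n_dvd : (n %| A + k%:Z * B)%Z).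

Let L := (a + b + s)%N.

Lemma shift_sum_neq0 : A + B != 0.
Proof. by apply: (contraNneq _ AB_odd) => ->; rewrite dvdz0. Qed.

Lemma spoke_count_ge2 : s <> 0%N -> (2 <= s)%N.
Proof. by move: s_even; case: s => [|[|]]. Qed.

Lemma balanced_walk_len : A + k%:Z * B = 0 -> ~~ odd k /\ (k + 3 <= L)%N.
Proof.
move=> bal.
have B_neq0 : B != 0.
  by apply: (contraNneq _ shift_sum_neq0) => B0; move: bal; rewrite B0 mulr0 !addr0 => ->.
have k_le_a : (k <= a)%N by nia.
have s_neq0 : s <> 0%N by move/no_spokes; lia.
split; last by have := spoke_count_ge2 s_neq0; rewrite /L; lia.
apply/negP=> k_odd; apply: (negP AB_odd); apply/dvdzP.
have k_half : k = (k./2.*2).+1 by rewrite -[in LHS](odd_double_half k) k_odd.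
by exists (- (k./2%:Z * B)); rewrite k_half in bal; nia.
Qed.

Lemma unbalanced_walk_len : A + k%:Z * B != 0 -> (n <= k * L)%N.
Proof.
move=> unbal; have : (n <= absz (A + k%:Z * B)%R)%N by rewrite dvdn_leq ?absz_gt0.
by rewrite /L; nia.
Qed.

Lemma dvdz_sum_of_dvd_pred (d : nat) : (d %| n)%N -> (d %| k.-1)%N -> (d %| A + B)%Z.
Proof.
move=> dn dk; have dAkB : (d %| A + k%:Z * B)%Z by apply: dvdz_trans n_dvd.
have dkB : (d %| k.-1%:Z * B)%Z by apply: dvdz_mulr.
rewrite predn_int in dkB; last lia.
have -> : A + B = (A + k%:Z * B) - (k%:Z - 1) * B by ring.
exact: rpredB.
Qed.

Lemma dvdz_diff_of_dvd_succ (d : nat) : (d %| n)%N -> (d %| k.+1)%N -> (d %| A - B)%Z.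
Proof.
move=> dn dk; have dAkB : (d %| A + k%:Z * B)%Z by apply: dvdz_trans n_dvd.
have dkB : (d %| k.+1%:Z * B)%Z by apply: dvdz_mulr.
have -> : A - B = (A + k%:Z * B) - k.+1%:Z * B by rewrite -addn1 PoszD; ring.
exact: rpredB.
Qed.

Local Notation d1 := (gcdn n k.-1).
Local Notation d2 := (gcdn n k.+1).

Lemma gcdn_pred_dvd_sum : (d1 %| A + B)%Z.
Proof. exact: dvdz_sum_of_dvd_pred (dvdn_gcdl _ _) (dvdn_gcdr _ _). Qed.

Lemma gcdn_succ_dvd_diff : (d2 %| A - B)%Z.
Proof. exact: dvdz_diff_of_dvd_succ (dvdn_gcdl _ _) (dvdn_gcdr _ _). Qed.

Lemma gcdn_walk_len_spokes : s <> 0%N -> (minn d1 d2 + 2 <= L)%N.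
Proof.
move=> /spoke_count_ge2 s_ge2.
have : (d1 <= `|(A + B)%R|)%N.
  by apply: dvdn_leq; [rewrite absz_gt0 shift_sum_neq0 | exact: gcdn_pred_dvd_sum].
by rewrite /L; lia.
Qed.

Lemma gcdn_walk_len_inner : a = 0%N -> (minn d1 d2 + 2 <= L)%N.
Proof.
move=> a0; have A0 : A = 0 by lia.
have n_pos : (0 < n)%N by lia.
have k_succ_pred : (k.+1 - k.-1 = 2)%N by lia.
have d1B : (d1 %| `|B|)%N by have := gcdn_pred_dvd_sum; rewrite A0 add0r.
have d2B : (d2 %| `|B|)%N by have := gcdn_succ_dvd_diff; rewrite A0 sub0r dvdzE abszN.
have B_odd : ~~ (2 %| `|B|)%N by move: AB_odd; rewrite A0 add0r.
have d1_odd : ~~ (2 %| d1)%N.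
  by apply: (contraNN _ B_odd) => two_d1; exact: dvdn_trans two_d1 d1B.
have d12_coprime : coprime d1 d2.
  have g2 : (gcdn d1 d2 %| 2)%N.
    rewrite -k_succ_pred; apply: dvdn_sub.
      exact: dvdn_trans (dvdn_gcdr d1 d2) (dvdn_gcdr n k.+1).
    exact: dvdn_trans (dvdn_gcdl d1 d2) (dvdn_gcdr n k.-1).
  have g_neq2 : gcdn d1 d2 != 2%N.
    by apply: (contraNneq _ d1_odd) => <-; exact: dvdn_gcdl d1 d2.
  have g_pos : (0 < gcdn d1 d2)%N by rewrite !gcdn_gt0 n_pos.
  rewrite /coprime; move: (dvdn_leq (ltn0Sn 1) g2) g_pos g_neq2.
  by case: (gcdn d1 d2) => [|[|[|]]].
have B_pos : (0 < `|B|)%N.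
  by rewrite absz_gt0; apply: (contraNneq _ shift_sum_neq0) => ->; rewrite A0.
have d12_le : (d1 * d2 <= b)%N.
  by apply: leq_trans B_le; apply: dvdn_leq B_pos _; rewrite Gauss_dvd // d1B d2B.
apply: leq_trans (minn_add2_le_max3_mul d1 d2) _.
by rewrite geq_max len_gt2 /L a0 add0n (leq_trans d12_le) ?leq_addr.
Qed.

Lemma gcdn_walk_len_rim : b = 0%N -> (minn d1 d2 + 2 <= L)%N.
Proof.
move=> b0; have B0 : B = 0 by lia.
have A_pos : (0 < `|A|)%N.
  by rewrite absz_gt0; apply: (contraNneq _ shift_sum_neq0) => ->; rewrite B0.
have : (n <= `|A|)%N by rewrite dvdn_leq //; move: n_dvd; rewrite B0 mulr0 addr0.
have : (d1 <= k.-1)%N by rewrite dvdn_leq ?dvdn_gcdr //; lia.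
by rewrite /L; lia.
Qed.

Lemma gcdn_walk_len : (minn d1 d2 + 2 <= L)%N.
Proof.
have [s0|] := eqVneq s 0%N; last by move/eqP; exact: gcdn_walk_len_spokes.
by case: (no_spokes s0) => [/gcdn_walk_len_inner|/gcdn_walk_len_rim].
Qed.

End OddClosedWalkShift.

Lemma pet_odd_cycle_lower {n k : nat} {c : seq (pet_vertex n)} :
  (1 < k)%N -> (2 * k <= n)%N -> is_cycle (pet_adj k) c -> odd (size c) ->
  (minn (gcdn n k.-1) (gcdn n k.+1) + 2 <= size c)%N /\
  ((~~ odd k /\ (k + 3 <= size c)%N) \/ (n <= k * size c)%N).
Proof.
move=> k_gt1 le2kn [c_gt2 [_ c_cycle]] c_odd.
case: c c_gt2 c_cycle c_odd => [//|x p] c_gt2 c_path c_odd.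
have [o [o' [i [i' [s [size_p dv side spokes]]]]]] := pet_walk_counts c_path.
rewrite last_rcons size_rcons -/(size (x :: p)) in size_p dv side.
rewrite size_p in c_gt2 c_odd *.
set A := o%:Z - o'%:Z; set B := i%:Z - i'%:Z.
have s_even : ~~ odd s by move: side; case: x.1; case: odd.
have no_spokes : s = 0%N -> (o + o' = 0)%N \/ (i + i' = 0)%N.
  by move/spokes; case: x.1; [left | right].
have n_dvd : (n %| A + k%:Z * B)%Z by move: dv; rewrite subrr sub0r rpredN.
have AB_odd : ~~ (2 %| A + B)%Z.
  apply/dvdzP=> [[q AB_eq]].
  have := odd_double_half s; have := odd_double_half (o + o' + i + i' + s).
  by rewrite (negbTE s_even) c_odd; lia.
have -> : (o + o' + i + i' + s = o + o' + (i + i') + s)%N by rewrite !addnA.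
split; first by apply: (@gcdn_walk_len n k _ _ s A B) => //; lia.
have [bal|unbal] := eqVneq (A + k%:Z * B) 0.
  by left; apply: (@balanced_walk_len n k _ _ s A B) => //; lia.
by right; apply: (@unbalanced_walk_len n k _ _ s A B) => //; lia.
Qed.

Lemma pet_bipartite_odd_even n k : odd k -> ~~ odd n -> bipartite (pet_adj (n := n) k).
Proof.
move=> k_odd n_even; exists (fun x : pet_vertex n => x.1 (+) odd x.2).
case=> [[] [i hi]] [[] [j hj]]; rewrite /pet_adj /pet_arc /= ?orbF ?orFb.
- by case/orP=> /eqP ->; rewrite odd_mod ?(negbTE n_even) // oddD k_odd; case: odd.
- by move/eqP ->; case: odd.
- by move/eqP ->; case: odd.
- by case/orP=> /eqP ->; rewrite odd_mod ?(negbTE n_even) // addn1 /=; case: odd.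
Qed.

Lemma last_iota m len : last m (iota m.+1 len) = (m + len)%N.
Proof. by elim: len m => [|len IH] m /=; [rewrite addn0 | rewrite IH addnS]. Qed.

Lemma path_map_iota (T : Type) (e : rel T) (f : nat -> T) m len :
  (forall i, e (f i) (f i.+1)) -> path e (f m) (map f (iota m.+1 len)).
Proof. by move=> ef; elim: len m => [|len IH] m //=; rewrite ef IH. Qed.

Lemma last_map_iota (T : Type) (f : nat -> T) m len :
  last (f m) (map f (iota m.+1 len)) = f (m + len)%N.
Proof. by rewrite last_map last_iota. Qed.

Definition pet_vx {n : nat} (n_gt0 : (0 < n)%N) (b : bool) (i : nat) : pet_vertex n :=
  (b, Ordinal (ltn_pmod i n_gt0)).

Section PetCycles.

Variables (n k : nat) (n_gt0 : (0 < n)%N).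

Local Notation u := (pet_vx n_gt0 false).
Local Notation v := (pet_vx n_gt0 true).
Local Notation adj := (pet_adj (n := n) k).

Lemma pet_adj_sym x y : adj x y = adj y x.
Proof. by rewrite /pet_adj orbC. Qed.

Lemma pet_adj_rim i : adj (u i) (u i.+1).
Proof. by rewrite /pet_adj /pet_arc /= modnDml addn1 eqxx. Qed.

Lemma pet_adj_inner i : adj (v i) (v (i + k)).
Proof. by rewrite /pet_adj /pet_arc /= modnDml eqxx. Qed.

Lemma pet_adj_spoke i : adj (u i) (v i).
Proof. by rewrite /pet_adj /pet_arc /= eqxx. Qed.

Lemma pet_vx_mod b i j : (i %% n = j %% n)%N -> pet_vx n_gt0 b i = pet_vx n_gt0 b j.
Proof. by move=> ij; congr (_, _); apply: val_inj. Qed.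

Lemma pet_vx_inj b b' i j :
  pet_vx n_gt0 b i = pet_vx n_gt0 b' j -> b = b' /\ (i %% n = j %% n)%N.
Proof.
by move=> ij; split; [exact: (congr1 fst ij) | exact: (congr1 (fun x => val x.2) ij)].
Qed.

Lemma uniq_map_pet_vx b s :
  {in s, forall i, i < n}%N -> uniq s -> uniq (map (pet_vx n_gt0 b) s).
Proof.
move=> s_lt s_uniq; rewrite map_inj_in_uniq // => i j si sj /pet_vx_inj[_].
by rewrite !modn_small ?s_lt.
Qed.

Lemma pet_vx_notin_side b b' i s : b != b' -> pet_vx n_gt0 b i \notin map (pet_vx n_gt0 b') s.
Proof. by move=> bb'; apply/mapP=> [[j _ /pet_vx_inj[b_eq _]]]; rewrite b_eq eqxx in bb'. Qed.

Lemma pet_cycle_rim_spokes : (0 < k < n)%N ->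
  is_cycle adj (map u (iota 0 k.+1) ++ [:: v k; v 0]).
Proof.
case/andP=> k_gt0 k_lt_n; split; [|split].
- by rewrite size_cat size_map size_iota /= addn2.
- rewrite cat_uniq; apply/and3P; split.
  + by apply: uniq_map_pet_vx; [move=> i; rewrite mem_iota; lia | exact: iota_uniq].
  + by apply/hasPn=> y; rewrite !inE => /orP[] /eqP ->; exact: pet_vx_notin_side.
  + by rewrite /= inE andbT; apply/eqP=> /pet_vx_inj[_]; rewrite !modn_small //; lia.
- rewrite /= rcons_cat cat_path path_map_iota; last exact: pet_adj_rim.
  rewrite last_map_iota add0n /= pet_adj_spoke /= pet_adj_sym.
  by rewrite -{1}[k]add0n pet_adj_inner pet_adj_sym pet_adj_spoke.
Qed.

Lemma uniq_map_mulnr q : (0 < k)%N -> uniq (map (muln^~ k) (iota 0 q)).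
Proof.
move=> k_gt0; rewrite map_inj_in_uniq ?iota_uniq // => i j _ _ /= ij.
by apply/eqP; rewrite -(eqn_pmul2r k_gt0) ij.
Qed.

Lemma pet_cycle_inner_rim q r : (0 < k)%N -> (0 < q)%N -> n = (q * k + r.+1)%N ->
  is_cycle adj
    (map v (map (muln^~ k) (iota 0 q.+1)) ++ map u (iota (q * k) r.+1) ++ [:: u 0]).
Proof.
move=> k_gt0 q_gt0 n_eq; split; [|split].
- by rewrite !size_cat !size_map !size_iota /=; lia.
- rewrite cat_uniq; apply/and3P; split.
  + apply: uniq_map_pet_vx; last exact: uniq_map_mulnr.
    move=> i /mapP[j]; rewrite mem_iota => /andP[_ j_le] ->.
    by apply: (@leq_ltn_trans (q * k)); [rewrite leq_mul2r -ltnS j_le orbT | lia].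
  + apply/hasPn=> y; rewrite mem_cat mem_seq1 => /orP[/mapP[j _ ->] | /eqP ->];
      exact: pet_vx_notin_side.
  + rewrite cat_uniq has_seq1; apply/and3P; split=> //.
      by apply: uniq_map_pet_vx; [move=> i; rewrite mem_iota; lia | exact: iota_uniq].
    apply/negP=> /mapP[j]; rewrite mem_iota => j_range /pet_vx_inj[_].
    by rewrite mod0n modn_small; [have : (k <= q * k)%N by rewrite leq_pmull | ]; lia.
- rewrite /= rcons_cat cat_path -map_comp.
  rewrite (@path_map_iota _ _ (v \o muln^~ k)); last first.
    by move=> i; rewrite /= mulSnr pet_adj_inner.
  rewrite (@last_map_iota _ (v \o muln^~ k)) add0n /= rcons_cat cat_path.
  rewrite pet_adj_sym pet_adj_spoke path_map_iota; last exact: pet_adj_rim.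
  have u0_eq : u 0 = u (q * k + r).+1 by apply: pet_vx_mod; rewrite mod0n -addnS -n_eq modnn.
  have v0_eq : v (0 * k) = v (q * k + r).+1.
    by apply: pet_vx_mod; rewrite mul0n mod0n -addnS -n_eq modnn.
  by rewrite last_map_iota /= u0_eq v0_eq pet_adj_rim pet_adj_spoke.
Qed.

Lemma pet_cycle_inner q : (0 < k)%N -> (2 < q)%N -> n = (q * k)%N ->
  is_cycle adj (map v (map (muln^~ k) (iota 0 q))).
Proof.
move=> k_gt0 q_gt2 n_eq; split; [|split].
- by rewrite !size_map size_iota.
- apply: uniq_map_pet_vx; last exact: uniq_map_mulnr.
  move=> i /mapP[j]; rewrite mem_iota => /andP[_ j_lt] ->.
  by rewrite n_eq ltn_mul2r k_gt0.
- case: q q_gt2 n_eq => [//|q] _ n_eq; rewrite -map_comp /=.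
  have -> : rcons (map (v \o muln^~ k) (iota 1 q)) (v 0)
          = map (v \o muln^~ k) (iota 1 q.+1).
    rewrite -[q.+1]addn1 iotaD map_cat cats1 /= add1n; congr rcons.
    by apply: pet_vx_mod; rewrite mod0n -n_eq modnn.
  by rewrite (@path_map_iota _ _ (v \o muln^~ k)) // => i; rewrite /= mulSnr pet_adj_inner.
Qed.

End PetCycles.

Lemma pet_short_odd_cycle {n k : nat} : (0 < k)%N -> (2 * k <= n)%N -> odd k -> odd n ->
  exists c, [/\ is_cycle (pet_adj (n := n) k) c, odd (size c) &
              (size c * k <= n + k * k.+1)%N].
Proof.
move=> k_gt0 le2kn k_odd n_odd; have n_gt0 : (0 < n)%N by lia.
have n_eq := divn_eq n k; set q := (n %/ k)%N in n_eq; set r := (n %% k)%N in n_eq.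
have r_lt : (r < k)%N by rewrite ltn_mod.
have q_ge2 : (2 <= q)%N by rewrite leq_divRL //; lia.
case: r n_eq r_lt => [|r] n_eq r_lt.
  have q_odd : odd q by move: n_odd; rewrite n_eq addn0 oddM k_odd andbT.
  have q_gt2 : (2 < q)%N by case: q q_odd q_ge2 {n_eq} => [|[|[]]].
  exists (map (pet_vx n_gt0 true) (map (muln^~ k) (iota 0 q))).
  rewrite !size_map size_iota; split => //; last by lia.
  by apply: pet_cycle_inner; rewrite // n_eq addn0.
exists (map (pet_vx n_gt0 true) (map (muln^~ k) (iota 0 q.+1)) ++
        map (pet_vx n_gt0 false) (iota (q * k) r.+1) ++ [:: pet_vx n_gt0 false 0]).
rewrite !size_cat !size_map !size_iota /=; split.
- by apply: pet_cycle_inner_rim => //; lia.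
- by move: n_odd; rewrite n_eq !oddD oddM k_odd /= andbT; case: odd; case: odd.
- by rewrite n_eq; nia.
Qed.

Lemma pet_odd_girth_bounds {n k g : nat} :
  (1 < k)%N -> (2 * k <= n)%N -> ~ bipartite (pet_adj (n := n) k) ->
  is_odd_girth (pet_adj (n := n) k) g ->
  g = (k + 3)%N \/
  [/\ (n <= k * g)%N, (minn (gcdn n k.-1) (gcdn n k.+1) + 2 <= g)%N &
      (g * k <= n * par k + k * k.+1)%N].
Proof.
move=> k_gt1 le2kn non_bip [[c [c_cycle [c_odd c_size]]] g_min].
have [gcd_le short_or_lower] := pet_odd_cycle_lower k_gt1 le2kn c_cycle c_odd.
rewrite c_size in gcd_le short_or_lower c_odd.
have [->|g_neq] := eqVneq g (k + 3)%N; [by left | right].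
have n_gt0 : (0 < n)%N by lia.
rewrite /par; case: (boolP (odd k)) => [k_odd | k_even].
  have n_odd : odd n by apply: contra_notT non_bip => n_even; exact: pet_bipartite_odd_even.
  have [c' [c'_cycle c'_odd c'_le]] := pet_short_odd_cycle (ltnW k_gt1) le2kn k_odd n_odd.
  have g_le := g_min _ c'_cycle c'_odd.
  have lower : (n <= k * g)%N by case: short_or_lower => [[/negP] | ].
  by split=> //; rewrite muln1; apply: leq_trans c'_le; rewrite leq_mul2r g_le orbT.
have g_le : (g <= k + 3)%N.
  have k_range : (0 < k < n)%N by apply/andP; split; lia.
  have := g_min _ (pet_cycle_rim_spokes n k n_gt0 k_range).
  rewrite size_cat size_map size_iota [size _]/= addSnnS.
  by apply; rewrite oddD (negbTE k_even).
have g_le1 : (g <= k + 1)%N.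
  have : g != (k + 2)%N by apply: contraTneq c_odd => ->; rewrite oddD (negbTE k_even).
  by move: g_neq; lia.
have lower : (n <= k * g)%N by case: short_or_lower => [[_] | //]; lia.
by split=> //; rewrite muln0 add0n mulnC leq_mul2l -addn1 g_le1 orbT.
Qed.

Theorem theorem2 (n k : nat) (hk : (2 < 2 * k)%N) (hkn : (2 * k <= n)%N)
    (hnb : ~ bipartite (@pet_adj n k)) (g : nat)
    (hg : is_odd_girth (@pet_adj n k) g) :
  g = (k + 3)%N \/
  (Num.max (n%:Q / k%:Q) ((minn (gcdn n k.-1) (gcdn n k.+1))%:Q + 2) <= g%:Q /\
   g%:Q <= n%:Q / k%:Q * (par k)%:Q + k%:Q + 1).
Proof.
have k_gt1 : (1 < k)%N by lia.
have [->|[lower gcd_le upper]] := pet_odd_girth_bounds k_gt1 hkn hnb hg; [by left | right].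
have k_pos : (0 : rat) < k%:Q by rewrite ltr0z; lia.
split.
  rewrite ge_max ler_pdivrMr // -intrM ler_int (_ : 2 = 2%:Z%:~R) // -intrD ler_int.
  by apply/andP; split; lia.
have -> : n%:Q / k%:Q * (par k)%:Q + k%:Q + 1 = (n%:Q * (par k)%:Q + k%:Q * (k%:Q + 1)) / k%:Q.
  by field; rewrite lt0r_neq0.
by rewrite ler_pdivlMr // (_ : 1 = 1%:Z%:~R) // -!intrD -!intrM -intrD ler_int; lia.
Qed.
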